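(* Consider searching on a line with turn cost $t$ and lower bound $\lambda>0$, and suppose $s:=\frac{t}{2\lambda}\ge1$. Then the periodic strategy with distances $$x_i=\Big((1+s)\big(1+s^{-1}\big)^i-s\Big)\lambda,\qquad i\ge1,$$ is optimal, and its competitive ratio is $$\frac{2x_1+t+\lambda}{\lambda}=\frac{2\,(s+2)\,(s+\tfrac12)}{s}.$$
   Context: Searching on a line with turn cost. Fix $\lambda>0$, $t\ge 0$. A search strategy is a sequence $\mathcal S(i)=(x_i,r_i)$, $i\ge1$, with $x_i>0$, $r_i\in\{\mathrm{left},\mathrm{right}\}$ and $\sup\{x_i:r_i=\mathrm{left}\}=\sup\{x_i:r_i=\mathrm{right}\}=\infty$. At step $i$ the searcher walks distance $x_i$ from the origin along ray $r_i$ and, if the target is not found, walks back to the origin, paying an additional turn cost $t$; thus each unsuccessful step costs $2x_i+t$. The target is on one of the two rays at unknown distance $D\ge\lambda$ and is found at the first step $j$ with $r_j$ equal to its ray and $x_j\ge D$; the total cost is then $\sum_{i=1}^{j-1}(2x_i+t)+D$. The competitive ratio of $\mathcal S$ is the supremum over all target positions of total cost divided by $D$; a strategy is optimal if its competitive ratio is minimal among all search strategies. A periodic strategy with distances $x_i$ means $r_1\ne r_2$ and $r_{i+2}=r_i$ (the rays alternate). For a periodic strategy with increasing distances the competitive ratio equals $\max\Big\{\frac{2x_1+t+\lambda}{\lambda},\ \sup_{n\ge1}\frac{\sum_{i=1}^{n+1}(2x_i+t)+x_n}{x_n}\Big\}$. *)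

From Stdlib Require Import Reals Lra Lia.
Open Scope R_scope.

(* A search strategy: step i (i >= 1; index 0 is ignored) explores distance
   x i along ray r i (true = right, false = left). *)
Record strategy := mkStrategy { sx : nat -> R ; sr : nat -> bool }.

Fixpoint psum (f : nat -> R) (n : nat) : R :=
  match n with
  | O => 0
  | S k => psum f k + f (S k)
  end.

Definition valid_strategy (S : strategy) : Prop :=
  (forall i, (1 <= i)%nat -> 0 < sx S i) /\
  (forall (b : bool) (M : R), exists i, (1 <= i)%nat /\ sr S i = b /\ M < sx S i).

Definition found_at (S : strategy) (b : bool) (D : R) (j : nat) : Prop :=
  (1 <= j)%nat /\ sr S j = b /\ D <= sx S j /\
  forall i, (1 <= i)%nat -> (i < j)%nat -> ~ (sr S i = b /\ D <= sx S i).

Definition total_cost (t : R) (S : strategy) (D : R) (j : nat) : R :=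
  psum (fun i => 2 * sx S i + t) (j - 1) + D.

Definition ratio_set (lambda t : R) (S : strategy) (rho : R) : Prop :=
  exists (b : bool) (D : R) (j : nat),
    lambda <= D /\ found_at S b D j /\ rho = total_cost t S D j / D.

Definition comp_ratio (lambda t : R) (S : strategy) (c : R) : Prop :=
  is_lub (ratio_set lambda t S) c.

Definition periodic_rays (r : nat -> bool) : Prop :=
  r 1%nat <> r 2%nat /\ forall i, (1 <= i)%nat -> r (i + 2)%nat = r i.

Definition xopt (lambda t : R) (i : nat) : R :=
  let s := t / (2 * lambda) in
  ((1 + s) * (1 + / s) ^ i - s) * lambda.

(* With s = t/(2λ), the distances x_i satisfy
   sum_{i=1}^{n+1} (2 x_i + t) = 2 (1+s)^2/s * x_n  (reading x_0 = λ),
   so a target missed at step n and found at step n+2 costs at most 1 + 2(1+s)^2/s times its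
   distance, with equality for the target at distance λ found at step 2.

   Conversely, let a strategy have ratio c. Following its turn points (where the searcher
   last turns back before exceeding its previous reach on the other ray) gives reaches v_k
   and potentials V_k = cost_k/2 + (c-1)t/4 with
     V_{k+1} >= V_k + v_{k+1} + t/2   and   V_{k+1} <= (c-1)/2 * (v_k + t/2).
   If (c-1)/2 < (1+s)^2/s, the ratio V_{k+1}/V_k exceeds 1 but is bounded by a quantity
   that starts at 1 + 1/s and drops by a fixed amount at every turn, which is absurd. *)

From Stdlib Require Import Reals Lra Lia Psatz Classical.
Open Scope R_scope.

Lemma exists_least_nat (P : nat -> Prop) :
  (exists n, P n) -> exists n, P n /\ forall m, (m < n)%nat -> ~ P m.
Proof.
  intros Hex.
  destruct (Wf_nat.dec_inh_nat_subset_has_unique_least_element P (fun n => classic (P n)) Hex)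
    as [n [[Pn Hleast] _]].
  exists n; split; [exact Pn|].
  intros m Hm Pm; specialize (Hleast m Pm); lia.
Qed.

Lemma exists_argmax_nat (P : nat -> Prop) (f : nat -> R) (a N : nat) :
  (exists m, (a <= m < N)%nat /\ P m) ->
  exists j, (a <= j < N)%nat /\ P j /\ forall i, (a <= i < N)%nat -> P i -> f i <= f j.
Proof.
  induction N as [|N IH]; intros [m [Hm Pm]]; [lia|].
  destruct (classic (exists m, (a <= m < N)%nat /\ P m)) as [Hex|Hnone].
  - destruct (IH Hex) as [j [Hj [Pj Hmax]]].
    destruct (classic (P N /\ f j < f N)) as [[PN Hlt]|Hnot].
    + exists N; split; [lia|split; [exact PN|]].
      intros i Hi Pi; destruct (Nat.eq_dec i N) as [->|Hne]; [lra|].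
      specialize (Hmax i ltac:(lia) Pi); lra.
    + exists j; split; [lia|split; [exact Pj|]].
      intros i Hi Pi; destruct (Nat.eq_dec i N) as [->|Hne].
      * apply Rnot_lt_le; intro; apply Hnot; auto.
      * apply Hmax; [lia|exact Pi].
  - assert (Hm' : m = N).
    { destruct (Nat.eq_dec m N) as [|Hne]; [assumption|].
      exfalso; apply Hnone; exists m; split; [lia|exact Pm]. }
    subst m.
    exists N; split; [lia|split; [exact Pm|]].
    intros i Hi Pi; destruct (Nat.eq_dec i N) as [->|Hne]; [lra|].
    exfalso; apply Hnone; exists i; split; [lia|exact Pi].
Qed.

Lemma le_mul_of_forall_gt (a k v : R) : (forall D, v < D -> a <= k * D) -> a <= k * v.
Proof.
  intros H; apply Rle_plus_epsilon; intros eps Heps.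
  assert (Hk : 0 < Rabs k + 1) by (pose proof (Rabs_pos k); lra).
  assert (0 < eps / (Rabs k + 1)) by (apply Rdiv_lt_0_compat; lra).
  specialize (H (v + eps / (Rabs k + 1)) ltac:(lra)).
  assert (k * (eps / (Rabs k + 1)) <= eps).
  { apply (Rmult_le_reg_r (Rabs k + 1)); [exact Hk|].
    unfold Rdiv; rewrite Rmult_assoc, (Rmult_assoc eps), Rinv_l, Rmult_1_r by lra.
    pose proof (Rle_abs k); nra. }
  lra.
Qed.

Lemma psum_le_mono (f : nat -> R) (m n : nat) :
  (forall i, (1 <= i)%nat -> 0 <= f i) -> (m <= n)%nat -> psum f m <= psum f n.
Proof.
  intros Hf Hmn; induction Hmn as [|n Hmn IH]; [lra|].
  simpl; specialize (Hf (S n) ltac:(lia)); lra.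
Qed.

Lemma psum_add_le (f : nat -> R) (m n : nat) :
  (forall i, (1 <= i)%nat -> 0 <= f i) -> (m < n)%nat -> psum f m + f n <= psum f n.
Proof.
  intros Hf Hmn; destruct n as [|n]; [lia|].
  simpl; pose proof (psum_le_mono f m n Hf ltac:(lia)); lra.
Qed.

Lemma pow_ge_1_plus_mul (x : R) (n : nat) : 0 <= x -> 1 + INR n * x <= (1 + x) ^ n.
Proof.
  intros Hx; induction n as [|n IH]; [simpl; lra|].
  rewrite S_INR, <- tech_pow_Rmult; pose proof (pos_INR n); nra.
Qed.

Lemma sq_ge_turn_bound (s h : R) : 1 <= s -> 0 <= h -> s * h <= 1 ->
  (1 + s) ^ 2 * h + s * (1 - s * h) ^ 2 <= s * (1 + h) ^ 2.
Proof.
  intros Hs Hh Hsh.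
  assert (0 <= (1 - s * h) * h * (s * s - 1)) by (apply Rmult_le_pos; [apply Rmult_le_pos|]; nra).
  nra.
Qed.

(* rho^2/(rho-1) decreases on (1, 2] and equals (1+s)^2/s at rho = 1 + 1/s. *)
Lemma turn_margin (s k : R) : 1 <= s -> k < (1 + s) ^ 2 / s ->
  exists d, 0 < d /\
    forall rho, 1 < rho -> rho <= 1 + / s -> k * (rho - 1) + d * rho <= rho ^ 2.
Proof.
  intros Hs Hk.
  set (eps := (1 + s) ^ 2 / s - k).
  assert (Heps : 0 < eps) by (unfold eps; lra).
  set (d := Rmin (1 / 8) (eps / (4 * s))).
  assert (Hd1 : d <= 1 / 8) by apply Rmin_l.
  assert (Hd2 : d * (4 * s) <= eps).
  { assert (d <= eps / (4 * s)) by apply Rmin_r.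
    apply (Rmult_le_compat_r (4 * s)) in H; [|lra].
    unfold Rdiv in H; rewrite Rmult_assoc, Rinv_l, Rmult_1_r in H; lra. }
  exists d; split; [apply Rmin_glb_lt; [lra | apply Rdiv_lt_0_compat; lra]|].
  intros rho Hrho1 Hrho2.
  set (h := rho - 1).
  assert (Hsh : s * h <= 1).
  { assert (s * h <= s * / s) by (apply Rmult_le_compat_l; unfold h; lra).
    rewrite Rinv_r in H; lra. }
  assert (Hquad : (1 + s) ^ 2 / s * h + (1 - s * h) ^ 2 <= rho ^ 2).
  { apply (Rmult_le_reg_l s); [lra|].
    replace (s * ((1 + s) ^ 2 / s * h + (1 - s * h) ^ 2))
      with ((1 + s) ^ 2 * h + s * (1 - s * h) ^ 2) by (field; lra).
    replace rho with (1 + h) by (unfold h; ring).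
    apply sq_ge_turn_bound; unfold h in *; lra. }
  assert (Hrho : rho <= 2).
  { assert (/ s <= 1) by (rewrite <- Rinv_1; apply Rinv_le_contravar; lra). lra. }
  assert (Hmargin : d * rho <= (1 - s * h) ^ 2 + eps * h).
  { destruct (Rle_lt_dec (s * h) (1 / 2)).
    - assert (0 <= eps * h) by (unfold h; nra). nra.
    - assert (0 <= (1 - s * h) ^ 2) by nra. nra. }
  replace k with ((1 + s) ^ 2 / s - eps) by (unfold eps; ring).
  fold h; nra.
Qed.

Section DoublingRecurrence.

Variables (s kappa : R) (Reach : R -> R -> Prop).
Hypothesis Hs : 1 <= s.
Hypothesis Hstep : forall y V, Reach y V ->
  exists y' V', Reach y' V' /\ 0 < y' /\ V + y' <= V' /\ V' <= kappa * y.

Let reach_with_ratio (B : R) : Prop :=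
  exists y V P, Reach y V /\ 0 < y /\ 0 < P /\ P + y <= V /\ V <= B * P.

Let reach_with_ratio_step (d B : R) :
  (forall rho, 1 < rho -> rho <= 1 + / s -> kappa * (rho - 1) + d * rho <= rho ^ 2) ->
  B <= 1 + / s -> reach_with_ratio B -> reach_with_ratio (B - d).
Proof.
  intros Hd HB [y [V [P [HR [Hy [HP [HPV HVB]]]]]]].
  destruct (Hstep y V HR) as [y' [V' [HR' [Hy' [HVV' HV'y]]]]].
  assert (HB1 : 1 < B).
  { apply Rnot_le_lt; intro HBle. assert (B * P <= 1 * P) by (apply Rmult_le_compat_r; lra). lra. }
  assert (Hkappa : 0 < kappa).
  { apply Rnot_le_lt; intro Hk. assert (kappa * y <= 0 * y) by (apply Rmult_le_compat_r; lra). lra. }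
  assert (HV : 0 < V) by lra.
  exists y', V', V; split; [exact HR'|split; [exact Hy'|split; [exact HV|split; [exact HVV'|]]]].
  specialize (Hd B HB1 HB).
  assert (B * V' <= kappa * (B - 1) * V).
  { assert (B * V' <= B * (kappa * (V - P))) by (apply Rmult_le_compat_l; nra).
    assert (kappa * (B * P) >= kappa * V) by (apply Rle_ge, Rmult_le_compat_l; lra).
    nra. }
  assert ((kappa * (B - 1) + d * B) * V <= B ^ 2 * V) by (apply Rmult_le_compat_r; lra).
  apply (Rmult_le_reg_l B); nra.
Qed.

Lemma doubling_recurrence_bound :
  (exists y0 V0, Reach y0 V0 /\ 0 < V0 /\ kappa * y0 <= (1 + / s) * V0) ->
  (1 + s) ^ 2 / s <= kappa.
Proof.
  intros [y0 [V0 [HR0 [HV0 Hy0]]]].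
  apply Rnot_lt_le; intros Hkappa.
  destruct (turn_margin s kappa Hs Hkappa) as [d [Hd Hmargin]].
  assert (Hall : forall n, reach_with_ratio (1 + / s - INR n * d)).
  { induction n as [|n IH].
    - destruct (Hstep y0 V0 HR0) as [y1 [V1 [HR1 [Hy1 [HV01 HV1]]]]].
      exists y1, V1, V0; simpl; repeat split; try assumption; lra.
    - rewrite S_INR.
      replace (1 + / s - (INR n + 1) * d) with (1 + / s - INR n * d - d) by ring.
      apply reach_with_ratio_step; [exact Hmargin | | exact IH].
      pose proof (pos_INR n); nra. }
  destruct (INR_unbounded (/ s / d)) as [n Hn].
  destruct (Hall n) as [y [V [P [_ [Hy [HP [HPV HVB]]]]]]].
  assert (/ s < INR n * d).
  { apply (Rmult_lt_compat_r d) in Hn; [|lra].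
    unfold Rdiv in Hn; rewrite Rmult_assoc, Rinv_l, Rmult_1_r in Hn; lra. }
  nra.
Qed.

End DoublingRecurrence.

(** * Lower bound for arbitrary strategies *)

Lemma exists_found_at (S : strategy) (b : bool) (D : R) :
  valid_strategy S -> exists j, found_at S b D j.
Proof.
  intros [_ Hunb].
  destruct (Hunb b D) as [i [Hi [Hib HiD]]].
  destruct (exists_least_nat (fun j => (1 <= j)%nat /\ sr S j = b /\ D <= sx S j))
    as [j [[Hj [Hjb HjD]] Hleast]].
  { exists i; repeat split; auto; lra. }
  exists j; repeat split; auto.
  intros i' Hi' Hi'j [Hb HD]; apply (Hleast i' Hi'j); auto.
Qed.

(* A target just beyond v on ray b is found only after step n, so the ratio bound at it
   charges the whole cost of the first n steps to a distance arbitrarily close to v. *)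
Lemma cost_le_of_ray_bounded (lambda t c : R) (S : strategy) (n : nat) (b : bool) (v : R) :
  0 < lambda -> 0 <= t -> valid_strategy S -> comp_ratio lambda t S c -> lambda <= v ->
  (forall i, (1 <= i <= n)%nat -> sr S i = b -> sx S i <= v) ->
  psum (fun i => 2 * sx S i + t) n <= (c - 1) * v.
Proof.
  intros Hl Ht HS [Hub _] Hv Hbounded.
  apply le_mul_of_forall_gt; intros D HD.
  destruct (exists_found_at S b D HS) as [j Hj].
  pose proof Hj as [Hj1 [Hjb [HjD _]]].
  assert (Hnj : (n < j)%nat).
  { destruct (Nat.le_gt_cases j n) as [Hjn|]; [|assumption].
    specialize (Hbounded j ltac:(lia) Hjb); lra. }
  assert (Hratio : total_cost t S D j / D <= c).
  { apply Hub; exists b, D, j; split; [lra|split; [exact Hj|reflexivity]]. }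
  assert (Hcost : total_cost t S D j <= c * D).
  { apply (Rmult_le_compat_r D) in Hratio; [|lra].
    unfold Rdiv in Hratio; rewrite Rmult_assoc, Rinv_l, Rmult_1_r in Hratio; lra. }
  assert (Hmono : psum (fun i => 2 * sx S i + t) n <= psum (fun i => 2 * sx S i + t) (j - 1)).
  { apply psum_le_mono; [|lia]. intros i Hi; destruct HS as [Hpos _]; specialize (Hpos i Hi); lra. }
  unfold total_cost in Hcost; lra.
Qed.

(* After step e the searcher has gone at most v along ray b and at most w along the
   other ray, and it will pass w on the other ray (at step M) before passing v on ray b. *)
Definition turn_point (S : strategy) (lambda : R) (e : nat) (b : bool) (v w : R) : Prop :=
  lambda <= v /\ lambda <= w /\
  (forall i, (1 <= i <= e)%nat -> sr S i = b -> sx S i <= v) /\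
  (forall i, (1 <= i <= e)%nat -> sr S i = negb b -> sx S i <= w) /\
  exists M, (e < M)%nat /\ sr S M = negb b /\ w < sx S M /\
    forall i, (e < i <= M)%nat -> sr S i = b -> sx S i <= v.

Lemma turn_point_init (S : strategy) (lambda : R) :
  valid_strategy S -> exists b, turn_point S lambda 0 b lambda lambda.
Proof.
  intros [_ Hunb].
  destruct (Hunb true lambda) as [i [Hi [_ Hil]]].
  destruct (exists_least_nat (fun m => (1 <= m)%nat /\ lambda < sx S m))
    as [M [[HM HMl] Hleast]]; [exists i; auto|].
  exists (negb (sr S M)); repeat split; try lra; try (intros; lia).
  exists M; repeat split; [lia | symmetry; apply Bool.negb_involutive | exact HMl |].
  intros i' Hi' Hr'; destruct (Nat.eq_dec i' M) as [->|Hne].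
  - destruct (sr S M); discriminate Hr'.
  - apply Rnot_lt_le; intro Hlt; apply (Hleast i' ltac:(lia)); split; [lia|exact Hlt].
Qed.

(* The next turn point is the farthest step on the other ray before ray b is pushed past v. *)
Lemma turn_point_next (S : strategy) (lambda : R) (e : nat) (b : bool) (v w : R) :
  valid_strategy S -> turn_point S lambda e b v w ->
  exists e', (e < e')%nat /\ turn_point S lambda e' (negb b) (sx S e') v.
Proof.
  intros [_ Hunb] [Hv [Hw [Hb [Hnb [M [HeM [HMr [HMw HbM]]]]]]]].
  destruct (Hunb b v) as [i [Hi [Hib Hiv]]].
  destruct (exists_least_nat (fun N => (e < N)%nat /\ sr S N = b /\ v < sx S N))
    as [N [[HeN [HNb HNv]] HNleast]].
  { exists i; repeat split; auto.
    destruct (Nat.le_gt_cases i e) as [Hie|]; [|assumption].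
    specialize (Hb i ltac:(lia) Hib); lra. }
  assert (HMN : (M < N)%nat).
  { destruct (Nat.le_gt_cases N M) as [HNM|]; [|assumption].
    specialize (HbM N ltac:(lia) HNb); lra. }
  destruct (exists_argmax_nat (fun i => sr S i = negb b) (sx S) (e + 1) N)
    as [j [Hj [Hjr Hjmax]]]; [exists M; split; [lia|exact HMr]|].
  assert (HMj : sx S M <= sx S j) by (apply Hjmax; [lia|exact HMr]).
  exists j; split; [lia|].
  unfold turn_point; rewrite Bool.negb_involutive.
  split; [lra|split; [exact Hv|split; [|split]]].
  - intros i' Hi' Hr'; destruct (Nat.le_gt_cases i' e).
    + specialize (Hnb i' ltac:(lia) Hr'); lra.
    + apply Hjmax; [lia|exact Hr'].
  - intros i' Hi' Hr'; destruct (Nat.le_gt_cases i' e).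
    + apply Hb; [lia|exact Hr'].
    + apply Rnot_lt_le; intro Hlt; apply (HNleast i' ltac:(lia)); auto with arith.
  - exists N; repeat split; [lia|exact HNb|exact HNv|].
    intros i' Hi' Hr'; destruct (Nat.eq_dec i' N) as [->|Hne].
    + rewrite HNb in Hr'; destruct b; discriminate Hr'.
    + apply Hjmax; [lia|exact Hr'].
Qed.

Lemma comp_ratio_gt_1 (lambda t c : R) (S : strategy) :
  0 < lambda -> 0 <= t -> valid_strategy S -> comp_ratio lambda t S c -> 1 < c.
Proof.
  intros Hl Ht HS Hc.
  pose proof HS as [Hpos _]; specialize (Hpos 1%nat (le_n 1)).
  assert (Hcost := cost_le_of_ray_bounded lambda t c S 1 (sr S 1) (Rmax lambda (sx S 1))
                     Hl Ht HS Hc (Rmax_l _ _)).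
  assert (Hmax : 0 < Rmax lambda (sx S 1)) by (pose proof (Rmax_l lambda (sx S 1)); lra).
  simpl psum in Hcost.
  assert (0 < (c - 1) * Rmax lambda (sx S 1)).
  { apply (Rlt_le_trans _ (0 + (2 * sx S 1 + t))); [lra|].
    apply Hcost; intros i Hi _; replace i with 1%nat by lia; apply Rmax_r. }
  nra.
Qed.

(* The potential cost/2 + (c-1)t/4 makes the bound cost(e') <= (c-1) v homogeneous in v + t/2. *)
Lemma comp_ratio_lower_bound (lambda t c : R) (S : strategy) :
  0 < lambda -> 1 <= t / (2 * lambda) -> valid_strategy S -> comp_ratio lambda t S c ->
  1 + 2 * ((1 + t / (2 * lambda)) ^ 2 / (t / (2 * lambda))) <= c.
Proof.
  intros Hl Hs HS Hc.
  set (s := t / (2 * lambda)) in *.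
  assert (Ht : t = 2 * lambda * s) by (unfold s; field; lra).
  assert (Htpos : 0 < t) by nra.
  assert (Hc1 := comp_ratio_gt_1 lambda t c S Hl ltac:(lra) HS Hc).
  set (cost := psum (fun i => 2 * sx S i + t)).
  assert (Hterm : forall i, (1 <= i)%nat -> 0 <= 2 * sx S i + t).
  { intros i Hi; destruct HS as [Hpos _]; specialize (Hpos i Hi); lra. }
  enough ((1 + s) ^ 2 / s <= (c - 1) / 2) by lra.
  apply (doubling_recurrence_bound s ((c - 1) / 2)
           (fun y V => exists e b v w, turn_point S lambda e b v w /\
                         y = v + t / 2 /\ V = cost e / 2 + (c - 1) * t / 4)); [exact Hs| |].
  - intros y V [e [b [v [w [Hturn [-> ->]]]]]].
    destruct (turn_point_next S lambda e b v w HS Hturn) as [e' [Hee' Hturn']].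
    exists (sx S e' + t / 2), (cost e' / 2 + (c - 1) * t / 4).
    split; [exists e', (negb b), (sx S e'), v; auto|].
    pose proof HS as [Hpos _]; specialize (Hpos e' ltac:(lia)).
    assert (Hgrow := psum_add_le _ e e' Hterm Hee').
    destruct Hturn' as [_ [Hv [_ [Hbv _]]]]; rewrite Bool.negb_involutive in Hbv.
    assert (Hcost := cost_le_of_ray_bounded lambda t c S e' b v Hl ltac:(lra) HS Hc Hv Hbv).
    fold cost in Hgrow, Hcost.
    repeat split; lra.
  - destruct (turn_point_init S lambda HS) as [b Hturn].
    exists (lambda + t / 2), (cost 0%nat / 2 + (c - 1) * t / 4).
    split; [exists 0%nat, b, lambda, lambda; auto|].
    unfold cost; simpl psum; split; [nra|].
    apply Req_le; unfold s; field; lra.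
Qed.

(** * The periodic strategy *)

Lemma periodic_rays_parity (r : nat -> bool) (k : nat) :
  periodic_rays r -> r (1 + 2 * k)%nat = r 1%nat /\ r (2 + 2 * k)%nat = r 2%nat.
Proof.
  intros [_ Hper]; induction k as [|k [IH1 IH2]]; [auto|].
  replace (1 + 2 * S k)%nat with (1 + 2 * k + 2)%nat by lia.
  replace (2 + 2 * S k)%nat with (2 + 2 * k + 2)%nat by lia.
  rewrite !Hper by lia; auto.
Qed.

Lemma periodic_rays_recurrent (r : nat -> bool) (b : bool) (k : nat) :
  periodic_rays r -> exists i, (k < i)%nat /\ r i = b.
Proof.
  intros Hper; destruct (periodic_rays_parity r k Hper) as [H1 H2].
  destruct Hper as [H12 _].
  destruct (Bool.bool_dec b (r 1%nat)) as [->|Hb].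
  - exists (1 + 2 * k)%nat; split; [lia|exact H1].
  - exists (2 + 2 * k)%nat; split; [lia|].
    rewrite H2; destruct b, (r 1%nat), (r 2%nat); congruence.
Qed.

Lemma periodic_valid (lambda : R) (x : nat -> R) (r : nat -> bool) :
  0 < lambda -> periodic_rays r -> (forall i, (1 + INR i) * lambda <= x i) ->
  valid_strategy (mkStrategy x r).
Proof.
  intros Hl Hper Hx; split; simpl.
  - intros i _; specialize (Hx i); pose proof (pos_INR i); nra.
  - intros b M.
    destruct (INR_unbounded (M / lambda)) as [k Hk].
    destruct (periodic_rays_recurrent r b k Hper) as [i [Hki Hib]].
    exists i; split; [lia|split; [exact Hib|]].
    assert (INR k <= INR i) by (apply le_INR; lia).
    assert (M < INR k * lambda).
    { apply (Rmult_lt_compat_r lambda) in Hk; [|lra].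
      unfold Rdiv in Hk; rewrite Rmult_assoc, Rinv_l, Rmult_1_r in Hk; lra. }
    specialize (Hx i); nra.
Qed.

(* A target found at step n + 2 was missed at step n on the same ray, so it lies beyond x n. *)
Lemma periodic_ratio_le (lambda t K : R) (x : nat -> R) (r : nat -> bool) (rho : R) :
  0 < lambda -> 0 <= K -> periodic_rays r ->
  2 * x 1%nat + t <= K * lambda ->
  (forall n, (1 <= n)%nat -> psum (fun i => 2 * x i + t) (S n) <= K * x n) ->
  ratio_set lambda t (mkStrategy x r) rho -> rho <= 1 + K.
Proof.
  intros Hl HK [_ Hper] H1 Hn [b [D [j [HD [[Hj [Hjb [_ Hmiss]]] ->]]]]].
  unfold total_cost; cbn [sx sr] in *.
  apply (Rmult_le_reg_r D); [lra|].
  unfold Rdiv; rewrite Rmult_assoc, Rinv_l, Rmult_1_r by lra.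
  destruct j as [|[|[|n]]]; [lia| | |].
  - simpl; nra.
  - simpl; nra.
  - replace (S (S (S n)) - 1)%nat with (S (S n)) by lia.
    assert (Hxn : x (S n) < D).
    { apply Rnot_le_lt; intro Hle; apply (Hmiss (S n)); [lia|lia|split; [|exact Hle]].
      rewrite <- Hjb, <- Hper by lia; f_equal; lia. }
    specialize (Hn (S n) ltac:(lia)); nra.
Qed.

Lemma periodic_ratio_attained (lambda t : R) (x : nat -> R) (r : nat -> bool) :
  periodic_rays r -> lambda <= x 2%nat ->
  ratio_set lambda t (mkStrategy x r) ((2 * x 1%nat + t + lambda) / lambda).
Proof.
  intros [H12 _] Hx2.
  exists (r 2%nat), lambda, 2%nat; split; [lra|split].
  - repeat split; auto; simpl.
    intros i Hi1 Hi2 [Hri _]; replace i with 1%nat in Hri by lia; congruence.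
  - unfold total_cost; simpl; rewrite Rplus_0_l; reflexivity.
Qed.

Lemma periodic_comp_ratio (lambda t K : R) (x : nat -> R) (r : nat -> bool) :
  0 < lambda -> 0 <= K -> periodic_rays r -> lambda <= x 2%nat ->
  2 * x 1%nat + t = K * lambda ->
  (forall n, (1 <= n)%nat -> psum (fun i => 2 * x i + t) (S n) <= K * x n) ->
  comp_ratio lambda t (mkStrategy x r) ((2 * x 1%nat + t + lambda) / lambda).
Proof.
  intros Hl HK Hper Hx2 H1 Hn.
  assert (Hval : (2 * x 1%nat + t + lambda) / lambda = 1 + K) by (rewrite H1; field; lra).
  split.
  - intros rho Hrho; rewrite Hval.
    exact (periodic_ratio_le lambda t K x r rho Hl HK Hper (Req_le _ _ H1) Hn Hrho).
  - intros c Hc; apply Hc, periodic_ratio_attained; assumption.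
Qed.

Lemma xopt_ge (lambda t : R) (i : nat) :
  0 < lambda -> 1 <= t / (2 * lambda) -> (1 + INR i) * lambda <= xopt lambda t i.
Proof.
  intros Hl Hs; unfold xopt; cbv zeta.
  set (s := t / (2 * lambda)) in *.
  assert (Hinv : 0 < / s) by (apply Rinv_0_lt_compat; lra).
  assert (Hpow := pow_ge_1_plus_mul (/ s) i ltac:(lra)).
  apply Rmult_le_compat_r; [lra|].
  assert (Hexp : (1 + s) * (1 + INR i * / s) - s = 1 + INR i + INR i * / s) by (field; lra).
  assert (0 <= INR i * / s) by (pose proof (pos_INR i); nra).
  nra.
Qed.

Lemma xopt_psum (lambda t : R) (n : nat) :
  0 < lambda -> 0 < t ->
  psum (fun i => 2 * xopt lambda t i + t) (S n)
  = 2 * ((1 + t / (2 * lambda)) ^ 2 / (t / (2 * lambda))) * xopt lambda t n.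
Proof.
  intros Hl Ht; unfold xopt; cbv zeta.
  set (s := t / (2 * lambda)).
  assert (Hts : t = 2 * lambda * s) by (unfold s; field; lra).
  assert (Hs : 0 < s) by (unfold s; apply Rdiv_lt_0_compat; lra).
  induction n as [|n IH].
  - simpl; rewrite Hts; field; lra.
  - cbn [psum] in IH |- *.
    rewrite IH, Hts; simpl; field; lra.
Qed.

Theorem theorem4 (lambda t : R) (r : nat -> bool) :
  0 < lambda -> 0 <= t -> 1 <= t / (2 * lambda) ->
  periodic_rays r ->
  let s := t / (2 * lambda) in
  let S0 := mkStrategy (xopt lambda t) r in
  valid_strategy S0 /\
  comp_ratio lambda t S0 ((2 * xopt lambda t 1 + t + lambda) / lambda) /\
  (2 * xopt lambda t 1 + t + lambda) / lambda = 2 * (s + 2) * (s + / 2) / s /\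
  (forall (S : strategy) (c : R),
      valid_strategy S -> comp_ratio lambda t S c ->
      (2 * xopt lambda t 1 + t + lambda) / lambda <= c).
Proof.
  intros Hl _ Hs Hper s S0; subst s S0.
  set (K := 2 * ((1 + t / (2 * lambda)) ^ 2 / (t / (2 * lambda)))).
  assert (Htpos : 0 < t).
  { assert (t = 2 * lambda * (t / (2 * lambda))) by (field; lra). nra. }
  assert (HK : 0 <= K) by (unfold K; apply Rmult_le_pos; [lra|apply Rlt_le, Rdiv_lt_0_compat; nra]).
  assert (Hx0 : xopt lambda t 0 = lambda) by (unfold xopt; simpl; ring).
  assert (Hx1 : 2 * xopt lambda t 1 + t = K * lambda).
  { pose proof (xopt_psum lambda t 0 Hl Htpos) as H; cbn [psum] in H; rewrite Hx0 in H; fold K in H; lra. }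
  assert (Hratio : (2 * xopt lambda t 1 + t + lambda) / lambda = 1 + K) by (rewrite Hx1; field; lra).
  assert (Hxge := fun i => xopt_ge lambda t i Hl Hs).
  split; [|split; [|split]].
  - exact (periodic_valid lambda (xopt lambda t) r Hl Hper Hxge).
  - apply periodic_comp_ratio with K; try assumption.
    + specialize (Hxge 2%nat); simpl in Hxge; lra.
    + intros n _; rewrite xopt_psum by assumption; apply Req_le; reflexivity.
  - rewrite Hratio; unfold K; field; lra.
  - intros S c HS Hc; rewrite Hratio; exact (comp_ratio_lower_bound lambda t c S Hl Hs HS Hc).
Qed.
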